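(* Let $\mu$ be a measure on the Borel subsets of $(0,\infty)$ with $\int_0^{\infty}\frac{\lambda}{\lambda^2 + 1} \,\mathrm{d}\mu(\lambda)< \infty$, let $\mathcal{R}=\{z\in\mathbb{C}:\Re(z)>0\}$, and define the analytic function $F_\mu:\mathcal{R}\to\mathbb{C}$ by $F_\mu(z)=\int_0^\infty\{e^{-\lambda z}-e^{-\lambda}\}\,\mathrm{d}\mu(\lambda)$. Then $\Phi=F_\mu$ satisfies: (a) for all $0<a<b<\infty$, $\lim_{y\to\pm\infty} e^{-\pi|y|}\int_a^b\left|\frac{\Phi(x+iy)}{x+iy}\right|\mathrm{d}x=0$; (b) for every $\eta>0$, $\sup_{x\ge\eta}\int_{-\infty}^\infty\left|\frac{\Phi(x+iy)}{x+iy}\right|e^{-\pi|y|}\,\mathrm{d}y<\infty$; (c) $\lim_{x\to\infty}\int_{-\infty}^\infty\left|\frac{\Phi(x+iy)}{x+iy}\right|e^{-\pi|y|}\,\mathrm{d}y=0$. *)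

From mathcomp Require Import all_boot all_order all_algebra.
From mathcomp Require Import all_classical all_reals all_analysis.
From mathcomp Require Import complex.
Set Implicit Arguments. Unset Strict Implicit. Unset Printing Implicit Defensive.
Import Order.TTheory GRing.Theory Num.Theory.
Local Open Scope classical_set_scope.
Local Open Scope ring_scope.
Local Open Scope complex_scope.

(* F_mu(z) = \int_0^oo (e^{-l z} - e^{-l}) dmu(l), for z = x + i y with x > 0.
   The complex-valued integral is, by definition, (integral of the real part)
   + i (integral of the imaginary part); with z = x + iy,
   e^{-l z} = e^{-l x} cos(l y) - i e^{-l x} sin(l y).
   mu is a measure on the Borel sets of R; only its restriction to the Borel
   subsets of (0,oo) is used. *)
Definition F_mu (R : realType) (mu : {measure set R -> \bar R}) (z : R[i]) : R[i] :=
  let x := complex.Re z in let y := complex.Im z in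
  (Rintegral mu `]0, +oo[ (fun l => expR (- (l * x)) * cos (l * y) - expR (- l)))
  +i* (Rintegral mu `]0, +oo[ (fun l => - (expR (- (l * x)) * sin (l * y)))).

Definition absquot (R : realType) (Phi : R[i] -> R[i]) (x y : R) : R :=
  Normc.normc (Phi (x +i* y) / (x +i* y)).

(* Write z = x + iy with x > 0.  For l > 0 the integrand of F_mu satisfies
   |e^{-l z} - e^{-l}| <= |z| psi_x(l), where
   psi_x(l) = min(l (1 + 1/x), (e^{-l x} + e^{-l}) / x):
   the first bound follows from 1 - cos t <= t^2/2 and the fact that e^{-t}
   is 1-Lipschitz on [0, oo), the second from the triangle inequality and
   x <= |z|.  Since psi_x(l) <= 2 (1 + 1/x)^2 l / (l^2 + 1), the function
   K(x) = \int psi_x dmu is finite, and |Phi(x + iy) / (x + iy)| <= K(x).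
   K is nonincreasing, and K(x) -> 0 as x -> oo by dominated convergence
   since psi_x <= 2 / x.  The integral in (a) is thus at most
   e^{-pi |y|} (b - a) K(a), and those in (b) and (c) at most (2 / pi) K(x),
   because \int e^{-pi |y|} dy = 2 / pi. *)
From mathcomp Require Import all_boot all_order all_algebra.
From mathcomp Require Import all_classical all_reals all_analysis.
From mathcomp Require Import complex measurable_realfun.
From mathcomp Require Import ring lra.
Import Order.TTheory GRing.Theory Num.Def Num.Theory.
Import numFieldNormedType.Exports.
Local Open Scope classical_set_scope.
Local Open Scope ring_scope.

Section elementary_inequalities.
Context {R : realType}.
Implicit Types (s t p q u v : R).

Lemma norm_sin_le t : `|sin t| <= `|t|.
Proof.
wlog t0 : t / 0 <= t.
  move=> H; case: (leP 0 t) => [/H//|t0].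
  by rewrite -normrN -sinN -(normrN t); apply: H; rewrite oppr_ge0 ltW.
have [c _ ] := @MVT_segment R sin cos 0 t t0 (fun x _ => is_derive_sin x)
  (continuous_subspaceT (@continuous_sin R)).
rewrite sin0 !subr0 => ->.
by rewrite normrM ler_piMl// cos_max.
Qed.

Lemma subr1_cos_le t : 1 - cos t <= t ^+ 2 / 2.
Proof.
have -> : t = (t / 2) *+ 2 by rewrite -mulr_natr divfK.
rewrite cos_mulr2n cos2sin2.
have := norm_sin_le (t / 2).
set s := sin _; set u := t / 2 => h.
have h2 : s ^+ 2 <= u ^+ 2.
  by rewrite -real_normK ?num_real// -[u ^+ 2]real_normK ?num_real// lerXn2r// ?nnegrE.
rewrite -mulr_natr; lra.
Qed.

Lemma expRN_le1 t : 0 <= t -> expR (- t) <= 1.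
Proof. by move=> t0; rewrite -expR0 ler_expR oppr_le0. Qed.

Lemma dist_expRN_le p q : 0 <= p -> 0 <= q ->
  `|expR (- p) - expR (- q)| <= `|p - q|.
Proof.
wlog pq : p q / p <= q.
  move=> H p0 q0; case: (leP p q) => [/H->//|/ltW qp].
  by rewrite distrC (distrC p); apply: H.
move=> p0 q0.
have e1 : expR (- q) <= expR (- p) by rewrite ler_expR lerN2.
rewrite ger0_norm ?subr_ge0// ler0_norm ?subr_le0// opprB.
have h := expR_ge1Dx (p - q).
have -> : expR (- q) = expR (- p) * expR (p - q).
  by rewrite -expRD; congr expR; ring.
have hp := expRN_le1 _ p0.
have hp0 : 0 < expR (- p) := expR_gt0 _.
nra.
Qed.

Lemma expRN_le_inv t : 0 < t -> expR (- t) <= t^-1.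
Proof.
move=> t0; rewrite expRN lef_pV2 ?posrE ?expR_gt0//.
have := expR_ge1Dx t; lra.
Qed.

Lemma sqrtr_le_sqr s t : 0 <= t -> s <= t ^+ 2 -> Num.sqrt s <= t.
Proof. by move=> t0 st; rewrite -(ger0_norm t0) -sqrtr_sqr ler_sqrt// sqr_ge0. Qed.

Lemma norm_le_sqrt_sqrD u v : `|u| <= Num.sqrt (u ^+ 2 + v ^+ 2).
Proof. by rewrite -sqrtr_sqr ler_sqrt ?addr_ge0 ?sqr_ge0 // lerDl sqr_ge0. Qed.

Lemma dot_unit_le_norm s t u v : s ^+ 2 + t ^+ 2 = 1 ->
  s * u + t * v <= Num.sqrt (u ^+ 2 + v ^+ 2).
Proof.
move=> st1; apply: le_trans (ler_norm _) _.
rewrite -sqrtr_sqr ler_sqrt ?addr_ge0 ?sqr_ge0 // -subr_ge0.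
(* Lagrange's identity *)
have -> : u ^+ 2 + v ^+ 2 - (s * u + t * v) ^+ 2 =
  (t * u - s * v) ^+ 2 + (u ^+ 2 + v ^+ 2) * (1 - (s ^+ 2 + t ^+ 2)) by ring.
by rewrite st1 subrr mulr0 addr0 sqr_ge0.
Qed.

End elementary_inequalities.

Section kernel.
Context {R : realType}.
Implicit Types (x y l : R).

Definition kernel_re x y l := expR (- (l * x)) * cos (l * y) - expR (- l).
Definition kernel_im x y l := - (expR (- (l * x)) * sin (l * y)).

Definition kernel_majorant x l :=
  minr (l * (1 + x^-1)) ((expR (- (l * x)) + expR (- l)) / x).

Lemma kernel_sqr_le_expRD x y l :
  kernel_re x y l ^+ 2 + kernel_im x y l ^+ 2 <=
  (expR (- (l * x)) + expR (- l)) ^+ 2.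
Proof.
rewrite /kernel_re /kernel_im.
have := cos2Dsin2 (l * y); have := cos_geN1 (l * y).
have := expR_gt0 (- (l * x)); have := expR_gt0 (- l).
set E := expR (- (l * x)); set e := expR (- l); set c := cos (l * y).
set s := sin (l * y) => e0 E0 c1 cs.
have -> : (E * c - e) ^+ 2 + (- (E * s)) ^+ 2 =
          (E + e) ^+ 2 - 2 * (E * e * (1 + c)).
  rewrite sqrrN exprMn.
  have -> : s ^+ 2 = 1 - c ^+ 2 by rewrite -cs; ring.
  ring.
rewrite lerBlDr lerDl !mulr_ge0 ?(ltW E0) ?(ltW e0) //; lra.
Qed.

Lemma kernel_sqr_le_dist x y l : 0 < l -> 0 < x ->
  kernel_re x y l ^+ 2 + kernel_im x y l ^+ 2 <= l ^+ 2 * ((x - 1) ^+ 2 + y ^+ 2).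
Proof.
move=> l0 x0; rewrite /kernel_re /kernel_im.
have cs := cos2Dsin2 (l * y); have c1 := subr1_cos_le (l * y).
have lx0 : 0 <= l * x by rewrite mulr_ge0 ?ltW.
have E0 := expR_gt0 (- (l * x)); have e0 := expR_gt0 (- l).
have E1 := expRN_le1 _ lx0; have e1 := expRN_le1 _ (ltW l0).
have lip := dist_expRN_le _ _ lx0 (ltW l0).
move: cs c1 E0 e0 E1 e1 lip.
set E := expR (- (l * x)); set e := expR (- l); set c := cos (l * y).
set s := sin (l * y) => cs c1 E0 e0 E1 e1 lip.
have h1 : (E - e) ^+ 2 <= (l * x - l) ^+ 2.
  by rewrite -[(E - e) ^+ 2]real_normK ?num_real//
     -[(l * x - l) ^+ 2]real_normK ?num_real// lerXn2r ?nnegrE.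
have h2 : E * e * (1 - c) <= 1 - c.
  have : 0 <= 1 - c by rewrite subr_ge0 cos_le1.
  have : E * e <= 1 by nra.
  nra.
have -> : (E * c - e) ^+ 2 + (- (E * s)) ^+ 2 =
          (E - e) ^+ 2 + 2 * (E * e * (1 - c)).
  rewrite sqrrN exprMn.
  have -> : s ^+ 2 = 1 - c ^+ 2 by rewrite -cs; ring.
  ring.
have e2 : (l * y) ^+ 2 = l ^+ 2 * y ^+ 2 by rewrite exprMn.
have e3 : (l * x - l) ^+ 2 = l ^+ 2 * (x - 1) ^+ 2 by ring.
rewrite e2 in c1; rewrite e3 in h1; rewrite mulrDr; lra.
Qed.

Lemma kernel_norm_le x y l : 0 < l -> 0 < x ->
  Num.sqrt (kernel_re x y l ^+ 2 + kernel_im x y l ^+ 2) <=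
  Num.sqrt (x ^+ 2 + y ^+ 2) * kernel_majorant x l.
Proof.
move=> l0 x0.
have xN : x <= Num.sqrt (x ^+ 2 + y ^+ 2).
  by apply: le_trans (norm_le_sqrt_sqrD x y); rewrite ler_norm.
have N2 : Num.sqrt (x ^+ 2 + y ^+ 2) ^+ 2 = x ^+ 2 + y ^+ 2.
  by rewrite sqr_sqrtr ?addr_ge0 ?sqr_ge0.
move: xN N2; set N := Num.sqrt _ => xN N2.
have N0 : 0 <= N := sqrtr_ge0 _.
have hE : 0 <= expR (- (l * x)) + expR (- l) by rewrite addr_ge0 ?expR_ge0.
have lx1 : 0 <= l * (1 + x^-1) by rewrite mulr_ge0 ?addr_ge0 ?invr_ge0 ?ltW.
rewrite /kernel_majorant; case: (leP (l * (1 + x^-1)) _) => _; apply: sqrtr_le_sqr.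
- exact: mulr_ge0 N0 lx1.
- apply: (le_trans (kernel_sqr_le_dist x y l l0 x0)).
  have h : l * (N + 1) <= N * (l * (1 + x^-1)).
    rewrite mulrCA ler_pM2l// mulrDr mulr1 lerD2l.
    by rewrite -[N * x^-1]/(N / x) ler_pdivlMr// mul1r.
  apply: le_trans (_ : (l * (N + 1)) ^+ 2 <= _); last first.
    by rewrite lerXn2r ?nnegrE ?(mulr_ge0 N0 lx1) ?mulr_ge0 ?addr_ge0 ?(ltW l0).
  rewrite exprMn ler_pM2l ?exprn_gt0//; nra.
- by rewrite mulr_ge0 // divr_ge0 ?(ltW x0).
- apply: (le_trans (kernel_sqr_le_expRD x y l)).
  have hd : 0 <= (expR (- (l * x)) + expR (- l)) / x by rewrite divr_ge0 ?(ltW x0).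
  rewrite lerXn2r ?nnegrE ?(mulr_ge0 N0 hd) //.
  by rewrite mulrCA ler_peMr// ler_pdivlMr// mul1r.
Qed.

Lemma kernel_majorant_ge0 x l : 0 < x -> 0 <= l -> 0 <= kernel_majorant x l.
Proof.
move=> x0 l0; rewrite /kernel_majorant le_min.
by rewrite mulr_ge0 ?divr_ge0 ?addr_ge0 ?invr_ge0 ?expR_ge0 ?(ltW x0).
Qed.

Lemma kernel_majorant_le_inv x l : 0 < x -> 0 <= l -> kernel_majorant x l <= 2 / x.
Proof.
move=> x0 l0; rewrite /kernel_majorant ge_min; apply/orP; right.
rewrite ler_pM2r ?invr_gt0//.
have := expRN_le1 _ (mulr_ge0 l0 (ltW x0)); have := expRN_le1 _ l0.
lra.
Qed.

Lemma kernel_majorant_nonincr x1 x2 l : 0 < x1 -> x1 <= x2 -> 0 < l ->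
  kernel_majorant x2 l <= kernel_majorant x1 l.
Proof.
move=> x10 x12 l0; have x20 := lt_le_trans x10 x12.
have iv : x2^-1 <= x1^-1 by rewrite lef_pV2 ?posrE.
rewrite /kernel_majorant le_min !ge_min ler_pM2l// lerD2l iv /=.
apply/orP; right; apply: ler_pM; rewrite ?addr_ge0 ?expR_ge0 ?invr_ge0 ?(ltW x20)//.
by rewrite lerD2r ler_expR lerN2 ler_pM2l.
Qed.

(* The two branches of the minimum handle l <= 1 and l > 1 respectively. *)
Lemma kernel_majorant_le_weight x l : 0 < x -> 0 < l ->
  kernel_majorant x l <= 2 * (1 + x^-1) ^+ 2 * (l / (l ^+ 2 + 1)).
Proof.
move=> x0 l0; rewrite mulrA.
have d0 : 0 < l ^+ 2 + 1 by rewrite ltr_wpDl ?sqr_ge0.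
rewrite ler_pdivlMr//.
have u0 : 0 < x^-1 by rewrite invr_gt0.
move: u0; set u := x^-1 => u0.
case: (leP l 1) => l1.
  have h : kernel_majorant x l <= l * (1 + u) by rewrite /kernel_majorant ge_min lexx.
  apply: le_trans (_ : l * (1 + u) * (l ^+ 2 + 1) <= _); first by rewrite ler_pM2r.
  have l2 : l ^+ 2 <= 1 by nra.
  have h2 : (1 + u) * (l ^+ 2 + 1) <= 2 * (1 + u) ^+ 2 by nra.
  by rewrite -mulrA [X in _ <= X]mulrC ler_pM2l.
have h : kernel_majorant x l <= (expR (- (l * x)) + expR (- l)) / x.
  by rewrite /kernel_majorant ge_min lexx orbT.
have w0 : 0 < l^-1 by rewrite invr_gt0.
have wl : l^-1 * l = 1 by rewrite mulVf// gt_eqF.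
have E1 : expR (- (l * x)) <= l^-1 * u.
  by rewrite /u -invfM expRN_le_inv// mulr_gt0.
have e1 : expR (- l) <= l^-1 by rewrite expRN_le_inv.
have w1 : l^-1 <= 1 by rewrite invf_le1// ltW.
move: w0 wl E1 e1 w1; set w := l^-1; set E := expR _; set e := expR _.
move=> w0 wl E1 e1 w1.
have h3 : (E + e) / x <= w * (1 + u) * u.
  by rewrite ler_pM2r// mulrDr mulr1; lra.
apply: le_trans (_ : w * (1 + u) * u * (l ^+ 2 + 1) <= _).
  by rewrite ler_pM2r//; apply: le_trans h h3.
have -> : w * (1 + u) * u * (l ^+ 2 + 1) = (1 + u) * u * (w * l ^+ 2 + w) by ring.
have -> : w * l ^+ 2 = l by rewrite expr2 mulrA wl mul1r.
have : (1 + u) * u * (l + w) <= (1 + u) * u * (2 * l).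
  by rewrite ler_pM2l ?mulr_gt0 ?addr_gt0//; lra.
move/le_trans; apply.
have -> : (1 + u) * u * (2 * l) = (2 * l) * ((1 + u) * u) by ring.
have -> : 2 * (1 + u) ^+ 2 * l = (2 * l) * ((1 + u) ^+ 2) by ring.
rewrite ler_pM2l ?mulr_gt0//; nra.
Qed.

End kernel.

Section integrals.
Context d (T : measurableType d) (R : realType) (mu : {measure set T -> \bar R}).

(* Unlike ge0_le_integral, this needs no measurability, which spares proving it
   for [absquot (F_mu mu)] in x and in y. *)
Lemma ge0_le_integral_nomeas (D : set T) (f g : T -> \bar R) :
  (forall t, D t -> 0 <= f t)%E -> (forall t, D t -> f t <= g t)%E ->
  (\int[mu]_(t in D) f t <= \int[mu]_(t in D) g t)%E.
Proof.
move=> f0 fg.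
have g0 t : D t -> (0 <= g t)%E by move=> Dt; exact: le_trans (f0 t Dt) (fg t Dt).
have neg (h : T -> \bar R) : (forall t, D t -> 0 <= h t)%E -> ((h \_ D)^\- = cst 0)%E.
  move=> h0; apply/funext => t.
  exact: (@ge0_funenegE _ _ [set: T] _ (fun s _ => erestrict_ge0 h0 s) t (in_setT t)).
have pos (h : T -> \bar R) : (forall t, D t -> 0 <= h t)%E -> ((h \_ D)^\+ = h \_ D)%E.
  move=> h0; apply/funext => t.
  exact: (@ge0_funeposE _ _ [set: T] _ (fun s _ => erestrict_ge0 h0 s) t (in_setT t)).
rewrite /integral (neg f)// (neg g)// (pos f)// (pos g)//.
apply: leeB => //; apply: ereal_sup_le => _ [h /= hf <-]; exists h => //= t.
apply: (le_trans (hf t)); rewrite /patch; case: ifPn => // /set_mem Dt.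
exact: fg.
Qed.

(* Test the integral of (u, v) against the unit vector in its direction. *)
Lemma norm_Rintegral2_le (D : set T) (u v g : T -> R) : measurable D ->
  mu.-integrable D (EFin \o u) -> mu.-integrable D (EFin \o v) ->
  mu.-integrable D (EFin \o g) ->
  (forall t, D t -> Num.sqrt (u t ^+ 2 + v t ^+ 2) <= g t) ->
  Num.sqrt (Rintegral mu D u ^+ 2 + Rintegral mu D v ^+ 2) <= Rintegral mu D g.
Proof.
move=> mD iu iv ig uvg.
set A := Rintegral mu D u; set B := Rintegral mu D v.
set S := Num.sqrt (A ^+ 2 + B ^+ 2).
have [->|S0] := eqVneq S 0.
  by apply: Rintegral_ge0 => t Dt; apply: le_trans (uvg t Dt); exact: sqrtr_ge0.
have S2 : S ^+ 2 = A ^+ 2 + B ^+ 2 by rewrite sqr_sqrtr // addr_ge0 ?sqr_ge0.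
have cs1 : (A / S) ^+ 2 + (B / S) ^+ 2 = 1.
  by rewrite !expr_div_n -mulrDl -S2 divff // expf_neq0.
have -> : S = A / S * A + B / S * B.
  by rewrite mulrAC [B / S * B]mulrAC -mulrDl -!expr2 -S2 expr2 mulfK.
have iAu := integrableZl mD (A / S) iu; have iBv := integrableZl mD (B / S) iv.
rewrite /A /B -RintegralZl // -RintegralZl // -RintegralD //.
apply: le_Rintegral => //; first exact: (integrableD mD iAu iBv).
by move=> t Dt; exact: le_trans (dot_unit_le_norm _ _ (u t) (v t) cs1) (uvg t Dt).
Qed.

End integrals.

Section majorant.
Context {R : realType} (mu : {measure set R -> \bar R}).
Local Notation D0 := (`]0%R, +oo[%classic : set R).

Definition majorant (x : R) := Rintegral mu D0 (kernel_majorant x).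

Lemma measurable_D0 : measurable D0. Proof. exact: measurable_itv. Qed.

Lemma measurable_expRNM (x : R) : measurable_fun [set: R] (fun l => expR (- (l * x))).
Proof.
apply: measurableT_comp; [exact: measurable_expR | apply: measurable_funN].
exact: measurable_funM.
Qed.

Lemma measurable_kernel_re (x y : R) : measurable_fun [set: R] (kernel_re x y).
Proof.
apply: measurable_funB; last first.
  by apply: measurableT_comp; [exact: measurable_expR | apply: measurable_funN].
apply: measurable_funM; first exact: measurable_expRNM.
apply: measurableT_comp; last exact: measurable_funM.
by apply: continuous_measurable_fun; exact: continuous_cos.
Qed.

Lemma measurable_kernel_im (x y : R) : measurable_fun [set: R] (kernel_im x y).
Proof.
apply: measurable_funN; apply: measurable_funM; first exact: measurable_expRNM.
apply: measurableT_comp; last exact: measurable_funM.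
by apply: continuous_measurable_fun; exact: continuous_sin.
Qed.

Lemma measurable_kernel_majorant (x : R) :
  measurable_fun [set: R] (kernel_majorant x).
Proof.
apply: measurable_minr; first exact: measurable_funM.
apply: measurable_funM => //; apply: measurable_funD; first exact: measurable_expRNM.
by apply: measurableT_comp; [exact: measurable_expR | apply: measurable_funN].
Qed.

Lemma majorant_ge0 (x : R) : 0 < x -> 0 <= majorant x.
Proof.
move=> x0; apply: Rintegral_ge0 => l; rewrite /= in_itv /= andbT => l0.
exact/kernel_majorant_ge0/ltW.
Qed.

Hypothesis hmu : (\int[mu]_(l in D0) (l / (l ^+ 2 + 1))%:E < +oo)%E.

Lemma integrable_weight : mu.-integrable D0 (fun l => (l / (l ^+ 2 + 1))%:E).
Proof.
apply/integrableP; split.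
  apply/measurable_EFinP; apply: measurable_funTS.
  apply: continuous_measurable_fun => l.
  have l0 : l ^+ 2 + 1 != 0 by rewrite gt_eqF// ltr_wpDl ?sqr_ge0.
  apply: (@continuousM R R^o id (fun l : R => (l ^+ 2 + 1)^-1)); first exact: cvg_id.
  apply: (@continuousV R R^o (fun l : R => l ^+ 2 + 1)) => //.
  apply: (@continuousD R R^o R^o (fun l : R => l ^+ 2) (cst 1)).
    by apply: (@continuousM R R^o id id); exact: cvg_id.
  exact: cst_continuous.
rewrite (eq_integral (fun l : R => (l / (l ^+ 2 + 1))%:E)) // => l.
rewrite inE /= in_itv /= andbT => l0.
by rewrite ger0_norm // divr_ge0 ?(ltW l0) ?addr_ge0 ?sqr_ge0.
Qed.

Lemma integrable_kernel_majorant (x : R) : 0 < x ->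
  mu.-integrable D0 (EFin \o kernel_majorant x).
Proof.
move=> x0.
have ig := integrableZl measurable_D0 (2 * (1 + x^-1) ^+ 2) integrable_weight.
apply: (le_integrable measurable_D0 _ _ ig).
  apply/measurable_EFinP; apply: measurable_funTS; exact: measurable_kernel_majorant.
move=> l; rewrite /= in_itv /= andbT => l0.
have w0 : 0 <= l / (l ^+ 2 + 1) by rewrite divr_ge0 ?(ltW l0) ?addr_ge0 ?sqr_ge0.
rewrite lee_fin !ger0_norm ?kernel_majorant_le_weight ?kernel_majorant_ge0 ?(ltW l0) //.
by rewrite mulr_ge0 // mulr_ge0 ?sqr_ge0.
Qed.

Lemma majorant_nonincr (x1 x2 : R) : 0 < x1 -> x1 <= x2 -> majorant x2 <= majorant x1.
Proof.
move=> x10 x12; have x20 := lt_le_trans x10 x12.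
apply: le_Rintegral; rewrite ?measurable_D0 ?integrable_kernel_majorant//.
by move=> l; rewrite /= in_itv /= andbT; exact: kernel_majorant_nonincr.
Qed.

Lemma majorant_natS_cvg0 : majorant n.+1%:R @[n --> \oo] --> 0.
Proof.
have : (\int[mu]_(l in D0) (kernel_majorant n.+1%:R l)%:E)%E @[n --> \oo] -->
       (\int[mu]_(l in D0) (cst 0%E l))%E.
  apply: (@dominated_cvg _ _ _ mu D0 measurable_D0 _ (cst 0%E)
     (EFin \o kernel_majorant 1)).
  - move=> n; apply/measurable_EFinP; apply: measurable_funTS.
    exact: measurable_kernel_majorant.
  - move=> l; rewrite /= in_itv /= andbT => l0.
    apply: cvg_EFin; first exact: nearW.
    apply: (@squeeze_cvgr _ _ _ _ (cst 0) (fun n => 2 * harmonic n)).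
    + apply: nearW => n /=; have n0 := ltr0Sn R n.
      rewrite kernel_majorant_ge0 ?(ltW l0) //=.
      exact: kernel_majorant_le_inv (ltW l0).
    + exact: cvg_cst.
    + by rewrite -(mulr0 2); apply: cvgMl_tmp; exact: cvg_harmonic.
  - by [].
  - exact: integrable_kernel_majorant _ ltr01.
  - move=> n l; rewrite /= in_itv /= andbT => l0.
    rewrite lee_fin ger0_norm ?kernel_majorant_ge0 ?(ltW l0) //.
    by apply: kernel_majorant_nonincr => //; rewrite ler1n.
by rewrite integral0; exact: fine_cvg.
Qed.

Lemma majorant_cvgy0 : majorant x @[x --> +oo] --> 0.
Proof.
apply/cvgrPdist_le => e e0.
have [N _ HN] := (cvgrPdist_le _ _).1 majorant_natS_cvg0 e e0.
exists N.+1%:R; split; first exact: num_real.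
move=> x Nx; have x0 : 0 < x by apply: lt_trans Nx.
have := HN N (leqnn N); rewrite /= !sub0r !normrN !ger0_norm ?majorant_ge0 //.
by apply: le_trans; apply: majorant_nonincr => //; exact: ltW.
Qed.

Lemma integrable_kernel (x y : R) : 0 < x ->
  mu.-integrable D0 (EFin \o kernel_re x y) /\
  mu.-integrable D0 (EFin \o kernel_im x y).
Proof.
move=> x0.
have ig := integrableZl measurable_D0 (Num.sqrt (x ^+ 2 + y ^+ 2))
  (integrable_kernel_majorant _ x0).
have hb l : D0 l -> Num.sqrt (kernel_re x y l ^+ 2 + kernel_im x y l ^+ 2) <=
                   `|Num.sqrt (x ^+ 2 + y ^+ 2) * kernel_majorant x l|.
  rewrite /= in_itv /= andbT => l0.
  rewrite ger0_norm ?mulr_ge0 ?sqrtr_ge0 ?kernel_majorant_ge0 ?(ltW l0) //.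
  exact: kernel_norm_le.
split; apply: (le_integrable measurable_D0 _ _ ig).
- apply/measurable_EFinP; apply: measurable_funTS; exact: measurable_kernel_re.
- by move=> l Dl; rewrite /= lee_fin; apply: le_trans (hb l Dl); exact: norm_le_sqrt_sqrD.
- apply/measurable_EFinP; apply: measurable_funTS; exact: measurable_kernel_im.
- move=> l Dl; rewrite /= lee_fin; apply: le_trans (hb l Dl).
  by rewrite addrC; exact: norm_le_sqrt_sqrD.
Qed.

Lemma absquot_ge0 (Phi : R[i] -> R[i]) (x y : R) : 0 <= absquot Phi x y.
Proof. by rewrite /absquot; case: (Phi _ / _) => a b /=; exact: sqrtr_ge0. Qed.

Lemma absquot_F_mu_le_majorant (x y : R) : 0 < x ->
  absquot (F_mu mu) x y <= majorant x.
Proof.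
move=> x0; rewrite /absquot Normc.normcM Normc.normcV /=.
have N0 : 0 < Num.sqrt (x ^+ 2 + y ^+ 2).
  by rewrite sqrtr_gt0 ltr_wpDr ?sqr_ge0 // exprn_gt0.
rewrite ler_pdivrMr // mulrC -RintegralZl ?measurable_D0 ?integrable_kernel_majorant//.
have [ire iim] := integrable_kernel x y x0.
apply: (@norm_Rintegral2_le _ _ _ mu _ (kernel_re x y) (kernel_im x y) _
  measurable_D0 ire iim).
  exact: (integrableZl measurable_D0 _ (integrable_kernel_majorant _ x0)).
by move=> l; rewrite /= in_itv /= andbT => l0; exact: kernel_norm_le.
Qed.

End majorant.

Section decay.
Context {R : realType}.

Lemma expRN_norm_mul_le (c M e y : R) : 0 < c -> 0 <= M -> 0 < e ->
  M / (c * e) < `|y| -> expR (- (c * `|y|)) * M <= e.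
Proof.
move=> c0 M0 e0 hy.
have y0 : 0 < `|y|.
  by apply: le_lt_trans hy; rewrite divr_ge0 ?mulr_ge0 ?(ltW c0) ?(ltW e0).
apply: le_trans (_ : (c * `|y|)^-1 * M <= e).
  by rewrite ler_wpM2r // expRN_le_inv // mulr_gt0.
rewrite ltr_pdivrMr ?mulr_gt0 // in hy.
rewrite mulrC ler_pdivrMr ?mulr_gt0 //.
by rewrite (_ : e * (c * `|y|) = `|y| * (c * e)) ?ltW //; ring.
Qed.

Lemma expRN_norm_mul_cvg0 (c M : R) : 0 < c -> 0 <= M ->
  expR (- (c * `|y|)) * M @[y --> +oo] --> 0 /\
  expR (- (c * `|y|)) * M @[y --> -oo] --> 0.
Proof.
move=> c0 M0; split; apply/cvgrPdist_le => e e0.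
- exists (M / (c * e)); split; first exact: num_real.
  move=> y hy; rewrite sub0r normrN ger0_norm ?mulr_ge0 ?expR_ge0 //.
  by apply: expRN_norm_mul_le => //; apply: lt_le_trans hy _; exact: ler_norm.
- exists (- (M / (c * e))); split; first exact: num_real.
  move=> y hy; rewrite sub0r normrN ger0_norm ?mulr_ge0 ?expR_ge0 //.
  apply: expRN_norm_mul_le => //; rewrite ltrNr in hy; apply: lt_le_trans hy _.
  by rewrite -normrN ler_norm.
Qed.

End decay.

Section lebesgue.
Context {R : realType}.
Local Open Scope ereal_scope.

Lemma integral_expRN_norm_le (c : R) : (0 < c)%R ->
  \int[lebesgue_measure]_y (expR (- (c * `|y|)))%:E <= (2 / c)%:E.
Proof.
move=> c0.
have cont : continuous (fun y : R => expR (- (c * `|y|))).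
  move=> y; apply: continuous_comp; last exact: continuous_expR.
  apply: (@continuousN _ R^o).
  apply: (@continuousM R R^o (cst c) normr); first exact: cst_continuous.
  exact: norm_continuous.
rewrite ge0_symfun_integralT ?expR_ge0// => [|y]; last by rewrite /= normrN.
(* e^{-c y} = c^-1 exponential_pdf c y for y >= 0 *)
have : \int[lebesgue_measure]_(y in [set y : R | (0 <= y)%R]) (expR (- (c * `|y|)))%:E
       <= (c^-1)%:E * \int[lebesgue_measure]_y (exponential_pdf c y)%:E.
  rewrite -integralZl //; last exact: integrable_exponential_pdf.
  rewrite [X in X <= _]integral_mkcond.
  apply: ge0_le_integral_nomeas => y _.
    by apply: erestrict_ge0 => z _; rewrite lee_fin expR_ge0.
  rewrite /patch; case: ifPn => [|_].
    rewrite inE /= => y0; rewrite exponential_pdfE // ger0_norm //.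
    by rewrite lee_fin mulrA mulVf ?gt_eqF // mul1r mulNr.
  by rewrite lee_fin mulr_ge0 ?invr_ge0 ?exponential_pdf_ge0 ?ltW.
rewrite integral_exponential_pdf // mule1 => h.
by rewrite (_ : (2 / c)%:E = 2%:E * (c^-1)%:E) ?EFinM//; exact: lee_wpmul2l.
Qed.

Lemma squeeze_cvge0 {F : set_system R} {FF : Filter F} {g : R -> \bar R} {h : R -> R} :
  h x @[x --> F] --> 0%R -> (\forall x \near F, 0 <= g x <= (h x)%:E) ->
  g x @[x --> F] --> 0.
Proof.
move=> h0 gh; apply: (@squeeze_cvge _ _ _ _ (cst 0) g (EFin \o h)) => //.
  exact: cvg_cst.
by apply: cvg_EFin; [exact: nearW | exact: h0].
Qed.

End lebesgue.

Section estimates.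
Context {R : realType} (mu : {measure set R -> \bar R}).
Hypothesis hmu : (\int[mu]_(l in `]0%R, +oo[) (l / (l ^+ 2 + 1))%:E < +oo)%E.
Local Open Scope ereal_scope.

Lemma vertical_integral_bound (x : R) : (0 < x)%R ->
  0 <= \int[lebesgue_measure]_y
         (absquot (F_mu mu) x y * expR (- (pi * `|y|)))%:E <=
       (majorant mu x * (2 / pi))%:E.
Proof.
move=> x0; have pi0 := pi_gt0 R; have K0 := majorant_ge0 mu _ x0.
apply/andP; split.
  by apply: integral_ge0 => y _; rewrite lee_fin mulr_ge0 ?absquot_ge0 ?expR_ge0.
apply: (@le_trans _ _ (\int[lebesgue_measure]_y
  ((majorant mu x)%:E * (expR (- (pi * `|y|)))%:E))).
  apply: ge0_le_integral_nomeas => y _.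
    by rewrite lee_fin mulr_ge0 ?absquot_ge0 ?expR_ge0.
  by rewrite -EFinM lee_fin ler_wpM2r ?expR_ge0 ?(absquot_F_mu_le_majorant mu hmu).
have ef0 y : [set: R] y -> 0 <= (expR (- (pi * `|y|)))%:E.
  by rewrite lee_fin expR_ge0.
have mef : measurable_fun [set: R] (EFin \o (fun y : R => expR (- (pi * `|y|)))).
  apply/measurable_EFinP; apply: measurableT_comp; first exact: measurable_expR.
  by apply: measurable_funN; apply: measurable_funM => //; exact: normr_measurable.
rewrite (ge0_integralZl_EFin lebesgue_measure measurableT ef0 mef K0) EFinM.
by rewrite lee_wpmul2l ?lee_fin ?integral_expRN_norm_le.
Qed.

Lemma horizontal_integral_bound (a b y : R) : (0 < a)%R -> (a < b)%R ->
  0 <= (expR (- (pi * `|y|)))%:E *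
       \int[lebesgue_measure]_(x in `[a, b]) (absquot (F_mu mu) x y)%:E <=
  (expR (- (pi * `|y|)) * (majorant mu a * (b - a)))%:E.
Proof.
move=> a0 ab; apply/andP; split.
  rewrite mule_ge0 ?lee_fin ?expR_ge0 //; apply: integral_ge0 => x _.
  by rewrite lee_fin absquot_ge0.
rewrite EFinM lee_wpmul2l ?lee_fin ?expR_ge0//.
apply: (@le_trans _ _ (\int[lebesgue_measure]_(x in `[a, b]) (majorant mu a)%:E)).
  apply: ge0_le_integral_nomeas => x; first by rewrite lee_fin absquot_ge0.
  rewrite /= in_itv /= => /andP[ax _]; have x0 := lt_le_trans a0 ax.
  rewrite lee_fin; apply: le_trans (absquot_F_mu_le_majorant mu hmu x y x0) _.
  exact: majorant_nonincr.
by rewrite integral_cst //= lebesgue_measure_itv /= lte_fin ab -EFinB -EFinM.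
Qed.

End estimates.

Theorem lemma5p1 (R : realType) (mu : {measure set R -> \bar R})
  (hmu : (\int[mu]_(l in `]0%R, +oo[) (l / (l ^+ 2 + 1))%:E < +oo)%E) :
  let Phi := F_mu mu in
  (forall a b : R, 0 < a -> a < b ->
     ((fun y : R => (expR (- (pi * `|y|)))%:E *
         \int[lebesgue_measure]_(x in `[a, b]) (absquot Phi x y)%:E)%E
        @ +oo --> 0%E) /\
     ((fun y : R => (expR (- (pi * `|y|)))%:E *
         \int[lebesgue_measure]_(x in `[a, b]) (absquot Phi x y)%:E)%E
        @ -oo --> 0%E)) /\
  (forall eta : R, 0 < eta ->
     (ereal_sup ((fun x : R => \int[lebesgue_measure]_(y in [set: R])
                       (absquot Phi x y * expR (- (pi * `|y|)))%:E)%E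
                 @` `[eta, +oo[) < +oo)%E) /\
  ((fun x : R => \int[lebesgue_measure]_(y in [set: R])
                   (absquot Phi x y * expR (- (pi * `|y|)))%:E)%E
     @ +oo --> 0%E).
Proof.
move=> Phi; have pi0 := pi_gt0 R.
split; [|split].
- move=> a b a0 ab.
  have M0 : 0 <= majorant mu a * (b - a) by rewrite mulr_ge0 ?majorant_ge0 ?subr_ge0 ?ltW.
  have [cvgp cvgn] := expRN_norm_mul_cvg0 _ _ pi0 M0.
  by split; [apply: (squeeze_cvge0 cvgp) | apply: (squeeze_cvge0 cvgn)];
    apply: nearW => y; exact: horizontal_integral_bound mu hmu a b y a0 ab.
- move=> eta eta0.
  apply: (@le_lt_trans _ _ (majorant mu eta * (2 / pi))%:E); last exact: ltry.
  apply: ge_ereal_sup => _ [x /= etax <-]; rewrite in_itv /= andbT in etax.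
  have x0 := lt_le_trans eta0 etax.
  apply: le_trans (andP (vertical_integral_bound mu hmu _ x0)).2 _.
  rewrite lee_fin ler_wpM2r ?divr_ge0 ?(ltW pi0) //.
  exact: majorant_nonincr mu hmu _ _ eta0 etax.
- apply: (squeeze_cvge0 (h := fun x => majorant mu x * (2 / pi))).
    by rewrite -(mul0r (2 / pi)); apply: cvgMr_tmp; exact: majorant_cvgy0.
  exists 0; split=> [|x x0]; first exact: num_real.
  exact: vertical_integral_bound mu hmu x x0.
Qed.
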